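(* Let $n\ge 1$, $N=\{1,\dots,n\}$, $A=(a_{ij})\in[0,1]^{n\times n}$ and $\lambda\in[0,+\infty)$. If for every $k=(k_1,\dots,k_n)\in K$ the system $$q_{(k_j-1)j}\le x_j\le q_{k_jj}\ \text{ for all } j\in N,\qquad \sum_{j\in N}\big[\delta_{ij}\, x_j+(1-\delta_{ij})\, a_{ij}\big]=\lambda x_i\ \text{ for all } i\in N$$ has no solution $x\in[0,1]^n$ with $x\neq\theta$, then $V(A,\lambda)=\emptyset$.
   Context: $\theta=(0,\dots,0)\in[0,1]^n$. For $x\in[0,1]^n$ and $\lambda\in[0,+\infty)$, the equation $A\odot x^T=\lambda x^T$ means $\sum_{j\in N}\min\{a_{ij},x_j\}=\lambda x_i$ for every $i\in N$. $V(A,\lambda)=\{x\in[0,1]^n : A\odot x^T=\lambda x^T,\ x\neq\theta\}$. For each $j\in N$, let $t_j$ be the number of distinct values in $\{a_{ij}: i\in N\}\cap(0,1)$, list these values as $q_{1j}<\dots<q_{t_jj}$, and put $q_{0j}=0$, $q_{(t_j+1)j}=1$. Let $K_j=\{1,\dots,t_j+1\}$ (the indices $k$ with $q_{kj}>0$) and $K=K_1\times\dots\times K_n$. For $k\in K$ and $i,j\in N$, $\delta_{ij}=1$ if $q_{k_jj}\le a_{ij}$ and $\delta_{ij}=0$ if $a_{ij}\le q_{(k_j-1)j}$. *)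

From mathcomp Require Import all_boot all_order all_algebra.
Set Implicit Arguments. Unset Strict Implicit. Unset Printing Implicit Defensive.
Import Order.TTheory GRing.Theory Num.Theory.
Local Open Scope ring_scope.

Section Defs.
Variables (R : realFieldType) (n : nat).

Definition in_unit_cube (x : 'rV[R]_n) : Prop := forall j, 0 <= x ord0 j <= 1.

(* A (.) x^T = lambda x^T  in max-min (Lukasiewicz-type) sense used by the paper:
   sum_j min(a_ij, x_j) = lambda x_i for all i *)
Definition eigen_eq (A : 'M[R]_n) (lam : R) (x : 'rV[R]_n) : Prop :=
  forall i, \sum_j Num.min (A i j) (x ord0 j) = lam * x ord0 i.

Definition V (A : 'M[R]_n) (lam : R) (x : 'rV[R]_n) : Prop :=
  in_unit_cube x /\ eigen_eq A lam x /\ x != 0.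

Definition qs (A : 'M[R]_n) (j : 'I_n) : seq R :=
  sort <=%R (undup [seq A i j | i <- enum 'I_n & (0 < A i j < 1)]).

Definition t (A : 'M[R]_n) (j : 'I_n) : nat := size (qs A j).

(* q_{kj} for 0 <= k <= t_j + 1, with q_{0j} = 0, q_{(t_j+1)j} = 1 *)
Definition q (A : 'M[R]_n) (k : nat) (j : 'I_n) : R :=
  nth 0 (0 :: rcons (qs A j) 1) k.

Definition in_K (A : 'M[R]_n) (k : 'I_n -> nat) : Prop :=
  forall j, (1 <= k j <= (t A j).+1)%N.

(* delta_ij (depending on k): 1 if q_{k_j j} <= a_ij, 0 otherwise (then a_ij <= q_{(k_j-1) j}) *)
Definition delta (A : 'M[R]_n) (k : 'I_n -> nat) (i j : 'I_n) : R :=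
  if q A (k j) j <= A i j then 1 else 0.

Definition system_k (A : 'M[R]_n) (lam : R) (k : 'I_n -> nat) (x : 'rV[R]_n) : Prop :=
  (forall j, q A (k j).-1 j <= x ord0 j <= q A (k j) j) /\
  (forall i, \sum_j (delta A k i j * x ord0 j + (1 - delta A k i j) * A i j)
             = lam * x ord0 i).

End Defs.

From mathcomp Require Import all_boot all_order all_algebra.
Set Implicit Arguments. Unset Strict Implicit. Unset Printing Implicit Defensive.
Import Order.TTheory GRing.Theory Num.Theory.
Local Open Scope ring_scope.

(* If x is in V(A, lambda), put each x_j in a cell [q_{(k_j-1)j}, q_{k_jj}] of
   the partition of [0,1] cut out by the entries of column j.  No entry a_ij
   lies strictly inside that cell, so min(a_ij, x_j) is x_j when
   q_{k_jj} <= a_ij and a_ij otherwise; hence x solves the system attached to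
   k, which was assumed to have no nonzero solution. *)

Lemma sorted_lt_nth_find (d : Order.disp_t) (T : orderType d) (x0 y a : T)
    (s : seq T) :
  sorted <=%O s -> a \in s -> (a < nth x0 s (find (fun b => y <= b) s))%O ->
  (a < y)%O.
Proof.
move=> s_sorted a_in_s a_lt.
have index_lt : (index a s < size s)%N by rewrite index_mem.
have [find_le | index_lt_find] := leqP (find (fun b => y <= b)%O s) (index a s).
  have find_lt := leq_ltn_trans find_le index_lt.
  have := sorted_leq_nth le_trans lexx x0 s_sorted _ _ find_lt index_lt find_le.
  by rewrite nth_index // leNgt a_lt.
by rewrite ltNge -{1}(nth_index x0 a_in_s) (before_find _ index_lt_find).
Qed.

Section Cells.
Variables (R : realFieldType) (n : nat) (A : 'M[R]_n) (j : 'I_n).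

Definition breakpoints : seq R := rcons (qs A j) 1.

Definition first_ge_index (y : R) : nat := find (fun b => y <= b) breakpoints.

Definition cell (y : R) : nat := (first_ge_index y).+1.

Lemma mem_qs_bounds a : a \in qs A j -> 0 < a < 1.
Proof.
rewrite /qs mem_sort mem_undup => /mapP [i].
by rewrite mem_filter => /andP [Aij _] ->.
Qed.

Lemma entry_mem_qs i : 0 < A i j < 1 -> A i j \in qs A j.
Proof.
move=> Aij; rewrite /qs mem_sort mem_undup; apply: map_f.
by rewrite mem_filter Aij mem_enum.
Qed.

Lemma breakpoints_sorted : sorted <=%R breakpoints.
Proof.
have qs_sorted : sorted <=%R (qs A j).
  by apply: sort_sorted => a b; exact: le_total.
rewrite /breakpoints; case: (qs A j) qs_sorted (@mem_qs_bounds) => [//|a s] /=.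
move=> qs_sorted qs_bounds; rewrite rcons_path qs_sorted /=.
by have /andP [_ /ltW] := qs_bounds _ (mem_last a s).
Qed.

Lemma breakpoint_le1 b : b \in breakpoints -> b <= 1.
Proof.
by rewrite mem_rcons inE => /predU1P [-> // | /mem_qs_bounds /andP [_ /ltW]].
Qed.

Section Point.
Variables (y : R) (y_le1 : y <= 1).

Lemma has_breakpoint_ge : has (fun b => y <= b) breakpoints.
Proof. by apply/hasP; exists 1; rewrite // mem_rcons mem_head. Qed.

Lemma first_ge_index_lt : (first_ge_index y < size breakpoints)%N.
Proof. by rewrite -has_find has_breakpoint_ge. Qed.

Lemma cell_bounds : (1 <= cell y <= (t A j).+1)%N.
Proof. by have := first_ge_index_lt; rewrite size_rcons. Qed.

Lemma le_q_cell : y <= q A (cell y) j.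
Proof. exact: (nth_find 0 has_breakpoint_ge). Qed.

Lemma q_cell_le1 : q A (cell y) j <= 1.
Proof. by apply: breakpoint_le1; apply: mem_nth; apply: first_ge_index_lt. Qed.

End Point.

Lemma q_pred_cell_le (y : R) : 0 <= y -> q A (cell y).-1 j <= y.
Proof.
rewrite /cell /q /=; case E: first_ge_index => [// | m] y_ge0 /=.
have m_lt : (m < first_ge_index y)%N by rewrite E.
by apply/ltW; rewrite ltNge (before_find _ m_lt).
Qed.

Lemma entry_le_of_lt_q_cell i (y : R) :
  0 <= A i j <= 1 -> 0 <= y <= 1 -> A i j < q A (cell y) j -> A i j <= y.
Proof.
move=> /andP [Aij_ge0 Aij_le1] /andP [y_ge0 y_le1] Aij_lt.
have [-> // | Aij_neq0] := eqVneq (A i j) 0.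
have [Aij_eq1 | Aij_neq1] := eqVneq (A i j) 1.
  by move: Aij_lt; rewrite Aij_eq1 ltNge q_cell_le1.
apply/ltW/(sorted_lt_nth_find breakpoints_sorted _ Aij_lt).
rewrite mem_rcons inE entry_mem_qs ?orbT //.
by rewrite lt0r Aij_neq0 Aij_ge0 lt_neqAle Aij_neq1.
Qed.

Lemma min_entry_cell (k : 'I_n -> nat) i (y : R) :
  0 <= A i j <= 1 -> 0 <= y <= 1 -> k j = cell y ->
  Num.min (A i j) y = delta A k i j * y + (1 - delta A k i j) * A i j.
Proof.
move=> Aij y_bounds kj; have /andP [_ y_le1] := y_bounds.
rewrite /delta kj; case: ifP => [q_le | /negbT q_gt].
  by rewrite mul1r subrr mul0r addr0 min_r // (le_trans (le_q_cell y_le1) q_le).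
rewrite -ltNge in q_gt.
by rewrite mul0r add0r subr0 mul1r min_l // entry_le_of_lt_q_cell.
Qed.

End Cells.

Theorem theorem3p2 (R : realFieldType) (n : nat) (A : 'M[R]_n) (lam : R) :
  (1 <= n)%N ->
  (forall i j, 0 <= A i j <= 1) ->
  0 <= lam ->
  (forall k : 'I_n -> nat, in_K A k ->
     ~ (exists x : 'rV[R]_n, in_unit_cube x /\ x != 0 /\ system_k A lam k x)) ->
  forall x : 'rV[R]_n, ~ V A lam x.
Proof.
move=> _ A_bounds _ no_solution x [x_cube [x_eigen x_neq0]].
pose k j := cell A j (x ord0 j).
apply: (no_solution k).
  by move=> j; have /andP [_ /(cell_bounds A j)] := x_cube j.
exists x; do !split => //.
  move=> j; have /andP [xj_ge0 xj_le1] := x_cube j.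
  by rewrite q_pred_cell_le // le_q_cell.
move=> i; rewrite -x_eigen; apply: eq_bigr => j _.
by rewrite (min_entry_cell (k := k) (A_bounds i j) (x_cube j)).
Qed.
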